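(* Let $G=(V,E)$ be a graph whose vertex set is partitioned into three (possibly empty) cliques $Q_1,Q_2,Q_3$ such that: (a) for all $i\neq j$, each vertex of $Q_i$ is adjacent to at most one vertex of $Q_j$; (b) for distinct $i,j,k$, if a vertex of $Q_i$ is adjacent to $b\in Q_j$ and to $c\in Q_k$, then $bc\in E$; (c) for each $i\in\{1,2,3\}$ there is a finite set of colours $L_i$ such that (i) every vertex $v\in Q_i$ has list $L(v)=L_i$, (ii) $|L_i|\ge |Q_i|$, (iii) there are colours $d_1\in L_1$, $d_2\in L_2$, $d_3\in L_3$ that are pairwise distinct, and (iv) no colour belongs to all three of $L_1,L_2,L_3$. Then $G$ admits an $L$-colouring, i.e., a proper vertex colouring in which every vertex $v$ receives a colour from $L(v)$. *)

From mathcomp Require Import all_boot.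
Set Implicit Arguments. Unset Strict Implicit. Unset Printing Implicit Defensive.

Definition simple_graph (T : finType) (e : rel T) : Prop :=
  symmetric e /\ irreflexive e.

Definition part_set (T : finType) (part : T -> 'I_3) (i : 'I_3) : {set T} :=
  [set v | part v == i].

Definition is_clique (T : finType) (e : rel T) (A : {set T}) : Prop :=
  forall u v, u \in A -> v \in A -> u != v -> e u v.

Definition L_colouring (T : finType) (C : Type) (e : rel T)
    (L : T -> C -> bool) (f : T -> C) : Prop :=
  (forall v, L v (f v)) /\ (forall u v, e u v -> f u <> f v).

From mathcomp Require Import all_boot.
Set Implicit Arguments. Unset Strict Implicit. Unset Printing Implicit Defensive.

(* By (a) and (b), a vertex v together with its neighbours outside its own part
   forms a clique (its block) meeting each part at most once, and every other
   edge leaving the block stays inside a part.  The colouring is built block by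
   block, by induction on the number of vertices, keeping distinct
   representatives d_i in L_i for the parts still present: colour the block by
   distinct c_i, delete c_i from L_i, and find new distinct representatives
   avoiding the c_i.  For a part meeting both the block and the rest, pick a
   second colour e_i in L_i other than d_i and send one of d_i, e_i to the block
   and the other to the rest; hypothesis (iv) guarantees a consistent choice.
   This only depends on which of the six colours d_i, e_i coincide, so it is
   checked by computation over all equality patterns. *)

Lemma iota_allP n (p : pred nat) : reflect (forall k : 'I_n, p k) (all p (iota 0 n)).
Proof.
apply: (iffP allP) => [p_iota k | p_ord i]; first by apply: p_iota; rewrite mem_iota /=.
by rewrite mem_iota => /= lt_in; apply: (p_ord (Ordinal lt_in)).
Qed.

Lemma iota_hasP n (p : pred nat) : reflect (exists k : 'I_n, p k) (has p (iota 0 n)).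
Proof.
apply: (iffP hasP) => [[i] | [k pk]]; last by exists (val k); rewrite ?mem_iota /=.
by rewrite mem_iota => /= lt_in pi; exists (Ordinal lt_in).
Qed.

(* Slot i < 3 stands for d_i and slot 3 + i for e_i; [same] tells which slots
   carry equal colours.  The bit t_k sends e_k to the block (column x). *)
Section TwoColumnPattern.
Variable same : rel nat.
Variables I J : bitseq.
Let inI i := nth false I i.
Let inJ i := nth false J i.
Let rows := iota 0 3.

Definition two_column_hyp : bool :=
  [&& all (fun i => all (fun j =>
        [&& inI i || inJ i, inI j || inJ j & same i j] ==> (i == j)) rows) rows,
      all (fun k => inI k && inJ k ==> ~~ same k (3 + k)) rows &
      all (fun a => has (fun i =>
        ~~ ((inI i || inJ i) && same a i) && ~~ (inI i && inJ i && same a (3 + i))) rows)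
        (iota 0 6)].

Definition two_column_sol (t : bitseq) : bool :=
  let x k := if [&& inI k, inJ k & nth false t k] then 3 + k else k in
  let y k := if [&& inI k, inJ k & ~~ nth false t k] then 3 + k else k in
  all (fun i => all (fun j => [&& inI i, inI j & same (x i) (x j)] ==> (i == j)) rows) rows &&
  all (fun i => all (fun j => [&& inJ i, inJ j & same (y i) (y j)] ==> (i == j)) rows) rows.

End TwoColumnPattern.

Definition bitseqs3 : seq bitseq :=
  [:: [:: false; false; false]; [:: false; false; true]; [:: false; true; false];
      [:: false; true; true]; [:: true; false; false]; [:: true; false; true];
      [:: true; true; false]; [:: true; true; true]].

Definition same_code (s : seq nat) : rel nat := fun a b => nth 0 s a == nth 0 s b.

(* Recording for each slot the first slot of the same colour gives a code
   s with s_a <= a, so these codes realise every equality pattern. *)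
Definition two_column_table : bool :=
  all (fun c1 => all (fun c2 => all (fun c3 => all (fun c4 => all (fun c5 =>
    let same := same_code [:: 0; c1; c2; c3; c4; c5] in
    all (fun I => all (fun J =>
      two_column_hyp same I J ==> has (two_column_sol same I J) bitseqs3) bitseqs3) bitseqs3)
  (iota 0 6)) (iota 0 5)) (iota 0 4)) (iota 0 3)) (iota 0 2).

Lemma two_column_tableP : two_column_table.
Proof. by vm_compute. Qed.

Lemma two_column_code_sol (s : seq nat) (I J : bitseq) :
  size s = 6 -> (forall a, a < 6 -> nth 0 s a <= a) ->
  I \in bitseqs3 -> J \in bitseqs3 ->
  two_column_hyp (same_code s) I J -> has (two_column_sol (same_code s) I J) bitseqs3.
Proof.
case: s => [|c0 [|c1 [|c2 [|c3 [|c4 [|c5 []]]]]]] //= _ code_le I3 J3.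
have /eqP-> : c0 == 0 by rewrite -leqn0 (code_le 0).
have mem_code a : a < 6 -> nth 0 [:: c0; c1; c2; c3; c4; c5] a \in iota 0 a.+1.
  by move=> lt_a6; rewrite mem_iota ltnS code_le.
move: two_column_tableP => /allP/(_ c1 (mem_code 1 isT))/allP/(_ c2 (mem_code 2 isT)).
move=> /allP/(_ c3 (mem_code 3 isT))/allP/(_ c4 (mem_code 4 isT)).
move=> /allP/(_ c5 (mem_code 5 isT))/allP/(_ I I3)/allP/(_ J J3).
exact/implyP.
Qed.

Lemma ord3_lt6 (i : 'I_3) : i < 6.
Proof. exact: ltn_trans (ltn_ord i) _. Qed.

Lemma ord3_addl_lt6 (i : 'I_3) : 3 + i < 6.
Proof. by rewrite ltn_add2l. Qed.

Lemma ord3_slot_lt6 (b : bool) (i : 'I_3) : (if b then 3 + i else i) < 6.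
Proof. by case: b; rewrite ?ord3_lt6 ?ord3_addl_lt6. Qed.

Section SlotCode.
Variables (C : eqType) (d e : 'I_3 -> C).

Definition slot_colour (a : nat) : C := if a < 3 then d (inord a) else e (inord (a - 3)).

Definition slot_colours : seq C := mkseq slot_colour 6.

Lemma slot_colour_d (k : 'I_3) : slot_colour k = d k.
Proof. by rewrite /slot_colour ltn_ord inord_val. Qed.

Lemma slot_colour_e (k : 'I_3) : slot_colour (3 + k) = e k.
Proof. by rewrite /slot_colour ltnNge leq_addr addKn inord_val. Qed.

Lemma slot_colour_if (b : bool) (k : 'I_3) :
  slot_colour (if b then 3 + k else k) = if b then e k else d k.
Proof. by case: b; rewrite ?slot_colour_d ?slot_colour_e. Qed.

Definition slot_codes : seq nat := mkseq (fun a => index (slot_colour a) slot_colours) 6.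

Lemma size_slot_codes : size slot_codes = 6.
Proof. exact: size_mkseq. Qed.

Lemma slot_codes_le a : a < 6 -> nth 0 slot_codes a <= a.
Proof.
move=> lt_a6; rewrite nth_mkseq //.
by have := @index_nth _ (d ord0) a slot_colours; rewrite size_mkseq nth_mkseq //; apply.
Qed.

Lemma same_slot_codes a b :
  a < 6 -> b < 6 -> same_code slot_codes a b = (slot_colour a == slot_colour b).
Proof.
have mem_colour x : x < 6 -> slot_colour x \in slot_colours.
  by move=> lt_x6; apply/mapP; exists x; rewrite ?mem_iota.
move=> lt_a6 lt_b6; rewrite /same_code !nth_mkseq //.
apply/eqP/eqP => [eq_index | -> //].
by rewrite -(nth_index (d ord0) (mem_colour a lt_a6)) eq_index nth_index ?mem_colour.
Qed.

End SlotCode.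

Definition set_bits (I : {set 'I_3}) : bitseq := mkseq (fun i => inord i \in I) 3.

Lemma nth_set_bits I (k : 'I_3) : nth false (set_bits I) k = (k \in I).
Proof. by rewrite nth_mkseq ?inord_val. Qed.

Lemma set_bits_in_bitseqs3 I : set_bits I \in bitseqs3.
Proof. by rewrite /set_bits /mkseq /=; case: (_ \in I); case: (_ \in I); case: (_ \in I). Qed.

Lemma two_column_orientation (C : eqType) (I J : {set 'I_3}) (d e : 'I_3 -> C) :
    {in I :|: J &, injective d} -> {in I :&: J, forall k, e k != d k} ->
    (forall x, ~ forall i, (i \in I :|: J) && (x == d i) || (i \in I :&: J) && (x == e i)) ->
  exists t : pred 'I_3,
    {in I &, injective (fun k => if (k \in I :&: J) && t k then e k else d k)} /\
    {in J &, injective (fun k => if (k \in I :&: J) && ~~ t k then e k else d k)}.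
Proof.
move=> d_inj e_neq_d no_common.
move: (slot_codes d e) (size_slot_codes d e) (slot_codes_le d e) (same_slot_codes d e).
move=> codes size_codes codes_le same_codes.
have same_d (a : nat) (j : 'I_3) :
    a < 6 -> same_code codes a j = (slot_colour d e a == d j).
  by move=> lt_a6; rewrite same_codes ?ord3_lt6 ?slot_colour_d.
have hyp : two_column_hyp (same_code codes) (set_bits I) (set_bits J).
  apply/and3P; split.
  - apply/iota_allP => i; apply/iota_allP => j; rewrite !nth_set_bits -!in_setU.
    rewrite same_d ?ord3_lt6 // slot_colour_d.
    by apply/implyP => /and3P[iIJ jIJ /eqP/d_inj->].
  - apply/iota_allP => k; rewrite !nth_set_bits -in_setI.
    rewrite same_codes ?ord3_lt6 ?ord3_addl_lt6 // slot_colour_d slot_colour_e.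
    by apply/implyP => /e_neq_d; rewrite eq_sym.
  - apply/iota_allP => a; apply/iota_hasP.
    have /forallPn[i not_common] := introN forallP (no_common (slot_colour d e a)).
    exists i; rewrite !nth_set_bits -in_setU -in_setI -negb_or same_d //.
    by rewrite same_codes ?ord3_addl_lt6 // slot_colour_e.
have /hasP[t _ /andP[/iota_allP solI /iota_allP solJ]] :=
  two_column_code_sol size_codes codes_le (set_bits_in_bitseqs3 I) (set_bits_in_bitseqs3 J) hyp.
exists (fun k => nth false t k); split=> i j iI jI; rewrite !in_setI iI jI /= ?andbT => eq_ij.
- have /iota_allP/(_ j)/implyP := solI i; rewrite !nth_set_bits iI jI.
  by rewrite same_codes ?ord3_slot_lt6 // !slot_colour_if eq_ij eqxx => /(_ isT)/eqP/val_inj.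
- have /iota_allP/(_ j)/implyP := solJ i; rewrite !nth_set_bits iI jI /=.
  by rewrite same_codes ?ord3_slot_lt6 // !slot_colour_if eq_ij eqxx => /(_ isT)/eqP/val_inj.
Qed.

Definition sdr (K C : finType) (L : K -> {set C}) (A : {set K}) (r : K -> C) : Prop :=
  {in A, forall i, r i \in L i} /\ {in A &, injective r}.

Definition unused_colours (K C : finType) (L : K -> {set C}) (A : {set K}) (r : K -> C) i :=
  if i \in A then L i :\ r i else L i.

Lemma two_column_sdr (C : finType) (L : 'I_3 -> {set C}) (I J : {set 'I_3}) (d : 'I_3 -> C) :
    (forall x, ~ forall i, x \in L i) -> sdr L (I :|: J) d ->
    {in I :&: J, forall k, 1 < #|L k|} ->
  exists c d' : 'I_3 -> C, sdr L I c /\ sdr (unused_colours L I c) J d'.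
Proof.
move=> no_common [dL d_inj] two_colours.
have sub_IJ : {subset I :&: J <= I :|: J} by move=> k; rewrite !inE => /andP[->].
pose e k := odflt (d k) [pick x in L k :\ d k].
have eL k : k \in I :&: J -> e k \in L k :\ d k.
  rewrite /e => kIJ; case: pickP => [x // | none].
  by have := two_colours k kIJ; rewrite (cardsD1 (d k)) dL ?sub_IJ // (eq_card0 none).
have e_neq_d : {in I :&: J, forall k, e k != d k}.
  by move=> k /eL; rewrite in_setD1 => /andP[].
have no_common_de x :
    ~ forall i, (i \in I :|: J) && (x == d i) || (i \in I :&: J) && (x == e i).
  move=> common; apply: (no_common x) => i.
  have /orP[/andP[iIJ /eqP->] | /andP[iIJ /eqP->]] := common i; first exact: dL.
  by have := eL i iIJ; rewrite in_setD1 => /andP[].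
have [t [c_inj d'_inj]] := two_column_orientation d_inj e_neq_d no_common_de.
pose c k := if (k \in I :&: J) && t k then e k else d k.
pose d' k := if (k \in I :&: J) && ~~ t k then e k else d k.
exists c, d'; split; split=> // i iA; rewrite /c /d'.
- case: ifP => [/andP[/eL] | _]; first by rewrite in_setD1 => /andP[].
  by apply: dL; rewrite in_setU iA.
rewrite /unused_colours; have [iI | iNI] := boolP (i \in I); last first.
  have -> : (i \in I :&: J) = false by rewrite inE (negbTE iNI).
  by apply: dL; rewrite in_setU iA orbT.
have iIJ : i \in I :&: J by rewrite inE iI iA.
have := eL i iIJ; rewrite iIJ !in_setD1 => /andP[e_neq_d_i e_i_L].
by case: (t i) => /=; rewrite ?e_neq_d_i ?e_i_L // eq_sym e_neq_d_i dL ?sub_IJ.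
Qed.

Section ThreeCliqueGraph.
Variables (T : finType) (e : rel T) (part : T -> 'I_3).
Hypothesis e_sym : symmetric e.
Hypothesis e_irr : irreflexive e.
Hypothesis part_neighbours_le1 : forall i j : 'I_3, i != j -> forall v,
  v \in part_set part i -> #|[set w in part_set part j | e v w]| <= 1.
Hypothesis cross_neighbours_adj : forall (i j k : 'I_3) (a b c : T),
  i != j -> j != k -> i != k ->
  a \in part_set part i -> b \in part_set part j -> c \in part_set part k ->
  e a b -> e a c -> e b c.

Lemma cross_neighbour_unique v u w :
  part u != part v -> part u = part w -> e v u -> e v w -> u = w.
Proof.
move=> puv puw evu evw.
have v_part : v \in part_set part (part v) by rewrite inE.
rewrite eq_sym in puv.
have /card_le1_eqP le1 := part_neighbours_le1 puv v_part.
by apply: le1; rewrite !inE ?evu ?evw -?puw eqxx.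
Qed.

Definition block (S : {set T}) v := [set w in S | (w == v) || e v w && (part w != part v)].

Lemma block_part_inj S v : {in block S v &, injective part}.
Proof.
move=> u w; rewrite !inE => /andP[_ /orP[/eqP-> | /andP[evu puv]]].
  by move=> /andP[_ /orP[/eqP-> // | /andP[_ pwv]]] pvw; rewrite pvw eqxx in pwv.
move=> /andP[_ /orP[/eqP-> puv' | /andP[evw _]]]; first by rewrite puv' eqxx in puv.
by move=> puw; apply: cross_neighbour_unique puv puw evu evw.
Qed.

Lemma block_exit_part S v u z :
  u \in block S v -> z \in S :\: block S v -> e u z -> part z = part u.
Proof.
move=> uB /setDP[zS zNB] euz; apply/eqP; apply: contraNT zNB => pzu.
rewrite /block inE zS /=; move: uB; rewrite inE => /andP[_ /orP[/eqP uv | /andP[evu puv]]].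
  by subst u; rewrite euz pzu orbT.
have [pzv | pzv] := eqVneq (part z) (part v).
  by rewrite (cross_neighbour_unique pzu pzv euz) ?eqxx // e_sym.
have evz : e v z.
  apply: (@cross_neighbours_adj (part u) (part v) (part z) u v z); rewrite ?inE //.
  - by rewrite eq_sym.
  - by rewrite eq_sym.
  - by rewrite e_sym.
by rewrite evz orbT.
Qed.

Definition part_card (S : {set T}) i := #|[set v in S | part v == i]|.

Lemma part_card_block S v b :
  b \in block S v -> part_card S (part b) = (part_card (S :\: block S v) (part b)).+1.
Proof.
move=> bB; have bS : b \in S by move: bB; rewrite inE => /andP[].
rewrite /part_card (cardsD1 b) inE bS eqxx add1n; congr _.+1; apply: eq_card => w.
rewrite in_setD1 [in LHS]in_set [in RHS]in_set in_setD.
have [wB | wNB] := boolP (w \in block S v); last by rewrite (contraNneq _ wNB) // => ->.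
apply/negbTE/and3P => -[ne_wb _ /eqP/(block_part_inj wB bB) eq_wb].
by rewrite eq_wb eqxx in ne_wb.
Qed.

Variable C : finType.

Definition colouring_on (S : {set T}) (L : 'I_3 -> {set C}) (f : T -> C) : Prop :=
  {in S, forall v, f v \in L (part v)} /\ {in S &, forall u w, e u w -> f u != f w}.

Lemma colouring_on_block S v (L : 'I_3 -> {set C}) (c f : _ -> C) :
    sdr L (part @: block S v) c ->
    colouring_on (S :\: block S v) (unused_colours L (part @: block S v) c) f ->
  colouring_on S L (fun w => if w \in block S v then c (part w) else f w).
Proof.
set B := block S v => -[cL c_inj] [fL f_proper].
have unused_sub i : {subset unused_colours L (part @: B) c i <= L i}.
  by rewrite /unused_colours; case: ifP => _ x //; case/setD1P.
have exit_colour u w : u \in B -> w \in S -> w \notin B -> e u w -> c (part u) != f w.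
  move=> uB wS wNB euw; have wS' : w \in S :\: B by rewrite inE wNB.
  have := fL w wS'; rewrite /unused_colours (block_exit_part uB wS' euw) imset_f //.
  by rewrite in_setD1 eq_sym => /andP[].
split=> [w wS | u w uS wS euw].
  case: ifP => wB; first exact/cL/imset_f.
  by apply/unused_sub/fL; rewrite inE wB.
case: ifP => uB; case: ifP => wB.
- apply: contraTneq euw => /c_inj eq_c.
  by rewrite (block_part_inj uB wB (eq_c (imset_f _ uB) (imset_f _ wB))) e_irr.
- by apply: exit_colour; rewrite ?wB.
- by rewrite eq_sym; apply: exit_colour; rewrite ?uB // e_sym.
- by apply: f_proper; rewrite // inE ?uB ?wB.
Qed.

Lemma part_card_unused S v (L : 'I_3 -> {set C}) (c : _ -> C) i :
    {in part @: block S v, forall i, c i \in L i} -> part_card S i <= #|L i| ->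
  part_card (S :\: block S v) i <= #|unused_colours L (part @: block S v) c i|.
Proof.
move=> cL; rewrite /unused_colours; case: ifP => [/imsetP[b bB ->] | _].
  by rewrite (part_card_block bB) (cardsD1 (c (part b))) cL ?imset_f.
apply: leq_trans; apply: subset_leq_card; apply/subsetP => w.
by rewrite !inE => /andP[/andP[_ ->] ->].
Qed.

Lemma colouring_on_of_sdr S (L : 'I_3 -> {set C}) (d : 'I_3 -> C) :
    (forall x, ~ forall i, x \in L i) -> (forall i, part_card S i <= #|L i|) ->
    sdr L (part @: S) d ->
  exists f, colouring_on S L f.
Proof.
elim: {S}_.+1 {-2}S (ltnSn #|S|) L d => // n IH S; rewrite ltnS => S_le_n L d.
move=> no_common S_fits dS.
have [-> | [v vS]] := set_0Vmem S; first by exists (fun=> d ord0); split=> ?; rewrite inE.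
set B := block S v.
have vB : v \in B by rewrite inE vS eqxx.
have BS : B \subset S by apply/subsetP => w; rewrite inE => /andP[].
have parts_S : part @: S = part @: B :|: part @: (S :\: B).
  by rewrite -imsetU -{1}(setID S B) (setIidPr BS).
have shared_parts : {in part @: B :&: part @: (S :\: B), forall k, 1 < #|L k|}.
  move=> _ /setIP[/imsetP[b bB ->] /imsetP[z zS' pbz]]; apply: leq_trans (S_fits _).
  rewrite (part_card_block bB) ltnS card_gt0; apply/set0Pn; exists z.
  by rewrite inE zS' pbz eqxx.
rewrite parts_S in dS; have [c [d' [cB d'S']]] := two_column_sdr no_common dS shared_parts.
have S'_lt_n : #|S :\: B| < n.
  apply: leq_trans (proper_card _) S_le_n; apply/properP; split; first exact: subsetDl.
  by exists v; rewrite // inE vB.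
have no_common' : forall x, ~ forall i, x \in unused_colours L (part @: B) c i.
  move=> x common; apply: (no_common x) => i; have := common i.
  by rewrite /unused_colours; case: ifP => // _ /setD1P[].
have S'_fits i : part_card (S :\: B) i <= #|unused_colours L (part @: B) c i|.
  by apply: part_card_unused; first case: cB.
have [f f_col] := IH (S :\: B) S'_lt_n _ d' no_common' S'_fits d'S'.
by exists (fun w => if w \in B then c (part w) else f w); apply: colouring_on_block.
Qed.

End ThreeCliqueGraph.

Theorem mainTheorem3 (T : finType) (e : rel T) (part : T -> 'I_3)
    (C : finType) (Ls : 'I_3 -> {set C}) :
  simple_graph e ->
  (forall i, is_clique e (part_set part i)) ->
  (* (a) *)
  (forall i j : 'I_3, i != j -> forall v, v \in part_set part i ->
     #|[set w in part_set part j | e v w]| <= 1) ->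
  (* (b) *)
  (forall (i j k : 'I_3) (a b c : T), i != j -> j != k -> i != k ->
     a \in part_set part i -> b \in part_set part j -> c \in part_set part k ->
     e a b -> e a c -> e b c) ->
  (* (c)(ii) *)
  (forall i, #|part_set part i| <= #|Ls i|) ->
  (* (c)(iii) *)
  (exists d : 'I_3 -> C, (forall i, d i \in Ls i) /\ injective d) ->
  (* (c)(iv) *)
  (forall c : C, ~ (forall i, c \in Ls i)) ->
  exists f : T -> C, L_colouring e (fun v c => c \in Ls (part v)) f.
Proof.
move=> [e_sym e_irr] _ part_neighbours_le1 cross_neighbours_adj parts_fit [d [dL d_inj]].
move=> no_common.
have T_fits i : part_card part [set: T] i <= #|Ls i|.
  by apply: leq_trans (parts_fit i); apply: subset_leq_card; apply/subsetP => v; rewrite !inE.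
have [f [fL f_proper]] := colouring_on_of_sdr e_sym e_irr part_neighbours_le1
  cross_neighbours_adj no_common T_fits (conj (in1W dL) (in2W d_inj)).
by exists f; split=> [v | u v euv]; [exact: fL | exact/eqP/f_proper].
Qed.
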